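(* Let $T$ be a theory over a vocabulary $\Sigma$ and let $V$ be a fixed set of propagators for $T$. Then the length of every $V$-refinement sequence from a finite four-valued $\Sigma$-structure $\tilde I$ is bounded by a polynomial in $|\tilde I|$.
   Context: Vocabularies are finite sets of predicate symbols. Truth values $\mathbf{t},\mathbf{f},\mathbf{u},\mathbf{i}$ with precision order $\mathbf{u} \le_p \mathbf{t} \le_p \mathbf{i}$, $\mathbf{u} \le_p \mathbf{f} \le_p \mathbf{i}$ ($\mathbf{t},\mathbf{f}$ incomparable). A four-valued $\Sigma$-structure $\tilde I$ has domain $D$ and assigns to each $P/n\in\Sigma$ a function $P^{\tilde I}:D^n\to\{\mathbf{t},\mathbf{f},\mathbf{u},\mathbf{i}\}$; two-valued structures are identified with ordinary structures. $|\tilde I|$ is the cardinality of the domain. $\tilde I\le_p\tilde J$ iff pointwise $\le_p$; $<_p$ is the strict version. A propagator for $T$ is a map $O$ on four-valued $\Sigma$-structures with $\tilde I\le_p O(\tilde I)$ and $O(\tilde I)\le_p M$ for every two-valued model $M$ of $T$ with $\tilde I\le_p M$. For a set $V$ of propagators, a $V$-refinement sequence from $\tilde I$ is a (possibly transfinite) sequence $\langle \tilde J_\xi\rangle_{0\le\xi\le\alpha}$ with $\tilde J_0=\tilde I$, $\tilde J_{\xi+1}=O(\tilde J_\xi)$ for some $O\in V$, $\tilde J_\xi<_p\tilde J_{\xi+1}$ for all $\xi<\alpha$, and $\tilde J_\lambda$ the $\le_p$-least upper bound of $\{\tilde J_\xi\mid\xi<\lambda\}$ for limit ordinals $\lambda\le\alpha$.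 *)

From mathcomp Require Import all_boot.
From Stdlib Require Import List.

Set Implicit Arguments.
Unset Strict Implicit.
Unset Printing Implicit Defensive.

Record vocab := Vocab { sym : finType; ar : sym -> nat }.

(* ---------- First-order formulas over a vocabulary (de Bruijn variables) *)
Inductive form (S : vocab) : Type :=
| FAtom (P : sym S) (args : 'I_(ar P) -> nat)
| FEq (i j : nat)
| FNeg (f : form S)
| FAnd (f g : form S)
| FEx (f : form S).

Definition struct2 (S : vocab) (D : Type) := forall P : sym S, ('I_(ar P) -> D) -> bool.

Definition scons (D : Type) (d : D) (e : nat -> D) : nat -> D :=
  fun n => match n with 0 => d | S n' => e n' end.

Fixpoint sat (S : vocab) (D : Type) (M : struct2 S D) (e : nat -> D) (f : form S)
  : Prop :=
  match f with
  | FAtom P args => M P (fun k => e (args k)) = true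
  | FEq i j => e i = e j
  | FNeg g => ~ sat M e g
  | FAnd g h => sat M e g /\ sat M e h
  | FEx g => exists d : D, sat M (scons d e) g
  end.

Definition theory (S : vocab) := form S -> Prop.
Definition is_model (S : vocab) (T : theory S) (D : Type) (M : struct2 S D) : Prop :=
  forall f, T f -> forall e : nat -> D, sat M e f.

Inductive tv := tv_t | tv_f | tv_u | tv_i.

Definition tv_le (a b : tv) : bool :=
  match a, b with
  | tv_u, _ => true
  | _, tv_i => true
  | tv_t, tv_t => true
  | tv_f, tv_f => true
  | _, _ => false
  end.

Definition struct4 (S : vocab) (D : Type) := forall P : sym S, ('I_(ar P) -> D) -> tv.

Definition emb (S : vocab) (D : Type) (M : struct2 S D) : struct4 S D :=
  fun P x => if M P x then tv_t else tv_f.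

Definition le_p (S : vocab) (D : Type) (I J : struct4 S D) : Prop :=
  forall P x, tv_le (I P x) (J P x).

Definition eq_s (S : vocab) (D : Type) (I J : struct4 S D) : Prop :=
  forall P x, I P x = J P x.

Definition lt_p (S : vocab) (D : Type) (I J : struct4 S D) : Prop :=
  le_p I J /\ ~ eq_s I J.

Definition propagator_map (S : vocab) := forall D : Type, struct4 S D -> struct4 S D.

Definition is_propagator (S : vocab) (T : theory S) (O : propagator_map S) : Prop :=
  forall (D : Type) (I : struct4 S D),
    le_p I (O D I) /\
    (forall M : struct2 S D, is_model T M -> le_p I (emb M) -> le_p (O D I) (emb M)).

(* The index set {xi | 0 <= xi <= alpha} of a possibly transfinite sequence:
   a well-founded strict total order with a greatest element (alpha). *)
Record wo_index := WOIndex {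
  idx :> Type;
  ilt : idx -> idx -> Prop;
  ilt_irrefl : forall x, ~ ilt x x;
  ilt_trans : forall x y z, ilt x y -> ilt y z -> ilt x z;
  ilt_total : forall x y, ilt x y \/ x = y \/ ilt y x;
  ilt_wf : well_founded ilt;
  imax : idx;
  imax_max : forall x, x = imax \/ ilt x imax
}.

Definition is_bottom (W : wo_index) (b : W) : Prop := forall z, z = b \/ ilt b z.

Definition succ_of (W : wo_index) (x y : W) : Prop :=
  ilt x y /\ forall z, ilt x z -> z = y \/ ilt y z.

Definition is_limit (W : wo_index) (l : W) : Prop :=
  ~ is_bottom l /\ ~ (exists x, succ_of x l).

(* The length alpha (the order type of the indices below the maximum)
   is at most the natural number N. *)
Definition length_le (W : wo_index) (N : nat) : Prop :=
  exists l : list W, (forall x : W, List.In x l) /\ (List.length l <= N.+1)%N.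

Definition refinement_seq (S : vocab) (V : propagator_map S -> Prop)
  (D : Type) (I : struct4 S D) (W : wo_index) (J : W -> struct4 S D) : Prop :=
  (forall b, is_bottom b -> eq_s (J b) I) /\
  (forall x y, succ_of x y ->
     (exists O, V O /\ eq_s (J y) (O D (J x))) /\ lt_p (J x) (J y)) /\
  (forall l, is_limit l ->
     (forall x, ilt x l -> le_p (J x) (J l)) /\
     (forall K : struct4 S D, (forall x, ilt x l -> le_p (J x) K) -> le_p (J l) K)).

(* coefficient list [c0; c1; ...; ck] denotes c0 + c1 n + ... + ck n^k *)
Definition peval (cs : list nat) (n : nat) : nat :=
  List.fold_right (fun c acc => c + n * acc) 0 cs.

From mathcomp Require Import all_boot.
From Stdlib Require Import Classical FunctionalExtensionality List.

Set Implicit Arguments.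
Unset Strict Implicit.
Unset Printing Implicit Defensive.

(* Measure the information in a four-valued structure by counting u as 0,
   t and f as 1 and i as 2 at every tuple.  This rank is monotone for the
   precision order, strictly so for strict refinements, and bounded by
   2 * sum_P |D|^(ar P), a polynomial in |D| whose degree is the largest
   arity of the vocabulary.  Along a refinement sequence the rank is strictly
   increasing: for x < y, the successor of x strictly refines stage x, and
   stage y refines that successor (limit stages are upper bounds of their
   predecessors).  So the indices inject into an initial segment of nat of
   polynomial size. *)

Definition tv_rank (a : tv) : nat :=
  match a with tv_u => 0 | tv_t | tv_f => 1 | tv_i => 2 end.

Lemma tv_rank_le a b : tv_le a b -> tv_rank a <= tv_rank b.
Proof. by case: a; case: b. Qed.

Lemma tv_rank_lt a b : tv_le a b -> a <> b -> tv_rank a < tv_rank b.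
Proof. by case: a; case: b. Qed.

Lemma tv_rank_max a : tv_rank a <= 2.
Proof. by case: a. Qed.

Lemma tv_le_trans a b c : tv_le a b -> tv_le b c -> tv_le a c.
Proof. by case: a; case: b; case: c. Qed.

Lemma ltn_sum (I : finType) (F G : I -> nat) i :
  (forall j, F j <= G j) -> F i < G i -> \sum_j F j < \sum_j G j.
Proof.
move=> leFG ltFGi; rewrite (bigD1 i) //= [X in _ < X](bigD1 i) //= -addSn.
by apply: leq_add => //; apply: leq_sum.
Qed.

Section StructRank.

Variables (S : vocab) (D : finType).

Definition struct_rank (I : struct4 S D) : nat :=
  \sum_(P : sym S) \sum_(x : {ffun 'I_(ar P) -> D}) tv_rank (I P x).

Lemma struct_rank_le (I J : struct4 S D) : le_p I J -> struct_rank I <= struct_rank J.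
Proof.
by move=> leIJ; apply: leq_sum => P _; apply: leq_sum => x _; apply: tv_rank_le.
Qed.

Lemma struct_rank_lt (I J : struct4 S D) : lt_p I J -> struct_rank I < struct_rank J.
Proof.
move=> [leIJ neIJ].
have [P /not_all_ex_not [x neIJx]] : exists P, ~ forall x, I P x = J P x.
  by apply: not_all_ex_not.
have x_ffun : (finfun x : 'I_(ar P) -> D) = x.
  by apply: functional_extensionality => k; rewrite ffunE.
apply: (ltn_sum (i := P)) => [Q|].
  by apply: leq_sum => y _; apply: tv_rank_le.
apply: (ltn_sum (i := finfun x)) => [y|]; first exact: tv_rank_le.
by rewrite x_ffun; apply: tv_rank_lt.
Qed.

Lemma struct_rank_max (I : struct4 S D) :
  struct_rank I <= \sum_(P : sym S) 2 * #|D| ^ ar P.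
Proof.
apply: leq_sum => P _; apply: leq_trans (_ : \sum_(x : {ffun 'I_(ar P) -> D}) 2 <= _).
  by apply: leq_sum => x _; apply: tv_rank_max.
by rewrite sum_nat_const card_ffun card_ord mulnC.
Qed.

End StructRank.

Section WellOrder.

Variable W : wo_index.

Lemma ilt_geF (x y : W) : ilt x y -> x = y \/ ilt y x -> False.
Proof.
move=> ltxy [eqxy|ltyx]; first by rewrite eqxy in ltxy; apply: ilt_irrefl ltxy.
exact: ilt_irrefl (ilt_trans ltxy ltyx).
Qed.

Lemma wo_min (Q : W -> Prop) :
  (exists z, Q z) -> exists m, Q m /\ forall z, Q z -> ~ ilt z m.
Proof.
move=> [z Qz]; apply: NNPP => noMin.
suff noQ : forall y, ~ Q y by apply: noQ Qz.
move=> y; induction (ilt_wf y) as [y _ IH] => Qy.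
by apply: noMin; exists y; split=> // w Qw ltwy; apply: (IH w ltwy Qw).
Qed.

Lemma wo_succ_between (x y : W) : ilt x y ->
  exists s, succ_of x s /\ (s = y \/ ilt s y).
Proof.
move=> ltxy.
have [m [ltxm m_min]] := wo_min (ex_intro (fun z => ilt x z) y ltxy).
exists m; split.
  split=> // z ltxz.
  by case: (ilt_total z m) => [ltzm|[->|ltmz]]; [case: (m_min z ltxz ltzm)|left|right].
by case: (ilt_total m y) => [ltmy|[->|ltym]]; [right|left|case: (m_min y ltxy ltym)].
Qed.

End WellOrder.

Section RefinementSeq.

Variables (S : vocab) (V : propagator_map S -> Prop) (D : finType).
Variables (I : struct4 S D) (W : wo_index) (J : W -> struct4 S D).
Hypothesis HJ : refinement_seq V I J.

Lemma refinement_seq_le_p y x : ilt x y -> le_p (J x) (J y).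
Proof.
have [_ [J_succ J_lim]] := HJ.
move: x; induction (ilt_wf y) as [y _ IH] => x ltxy.
case: (classic (exists x0, succ_of x0 y)) => [[x0 succ_x0]|not_succ].
  have [_ [leJx0 _]] := J_succ _ _ succ_x0.
  case: (ilt_total x x0) => [ltxx0|[->|ltx0x]] //.
    by move=> P z; apply: tv_le_trans (IH x0 (proj1 succ_x0) x ltxx0 P z) (leJx0 P z).
  by case: (ilt_geF ltxy (proj2 succ_x0 x ltx0x)).
case: (classic (is_bottom y)) => [bot_y|not_bot].
  by case: (ilt_geF ltxy (bot_y x)).
exact: (proj1 (J_lim y (conj not_bot not_succ)) x ltxy).
Qed.

Lemma refinement_seq_rank_lt x y : ilt x y -> struct_rank (J x) < struct_rank (J y).
Proof.
move=> ltxy; have [s [succ_s [<-|ltsy]]] := wo_succ_between ltxy;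
  have lt_rank_s := struct_rank_lt (proj2 (proj1 (proj2 HJ) _ _ succ_s)) => //.
exact/(leq_trans lt_rank_s)/struct_rank_le/refinement_seq_le_p.
Qed.

Lemma refinement_seq_rank_inj : injective (fun x => struct_rank (J x)).
Proof.
move=> x y eq_rank.
case: (ilt_total x y) => [ltxy|[//|ltyx]].
  by have := refinement_seq_rank_lt ltxy; rewrite eq_rank ltnn.
by have := refinement_seq_rank_lt ltyx; rewrite eq_rank ltnn.
Qed.

End RefinementSeq.

Lemma bounded_injective_listing (A : Type) (f : A -> nat) (K : nat) :
  injective f -> (forall x, f x < K) ->
  exists l : list A, (forall x, In x l) /\ (length l <= K)%N.
Proof.
move=> f_inj f_bound.
suff [l [l_all l_size]] : exists l : list A, (forall x, f x < K -> In x l) /\ (length l <= K)%N.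
  by exists l; split=> // x; apply: l_all.
elim: K {f_bound} => [|K [l [l_all l_size]]]; first by exists nil.
case: (classic (exists x, f x = K)) => [[x fxK]|noK].
  exists (x :: l); split=> // z; rewrite ltnS leq_eqVlt => /orP [/eqP fzK|ltzK].
    by left; apply: f_inj; rewrite fxK fzK.
  by right; apply: l_all.
exists l; split; last exact: leqW.
move=> z; rewrite ltnS leq_eqVlt => /orP [/eqP fzK|]; last exact: l_all.
by case: noK; exists z.
Qed.

Lemma peval_nseq k c n : peval (nseq k c) n = c * \sum_(d < k) n ^ d.
Proof.
elim: k => [|k IH]; first by rewrite big_ord0 muln0.
rewrite /= -/(peval (nseq k c) n) IH big_ord_recl /= expn0.
have -> : \sum_(i < k) n ^ bump 0 i = n * \sum_(i < k) n ^ i.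
  by rewrite big_distrr; apply: eq_bigr => i _; rewrite /bump /= add1n expnS.
by rewrite mulnDr muln1 mulnCA.
Qed.

Lemma sum_expn_le_peval (I : finType) (a : I -> nat) c n :
  \sum_i c * n ^ a i <= peval (nseq (\max_i a i).+1 (#|I| * c)) n.
Proof.
rewrite peval_nseq -mulnA -sum_nat_const; apply: leq_sum => i _.
rewrite leq_mul2l; apply/orP; right.
have a_lt : a i < (\max_j a j).+1 by rewrite ltnS; apply: leq_bigmax.
by rewrite (bigD1 (Ordinal a_lt)) //= leq_addr.
Qed.

Theorem proposition3p5 :
  forall (S : vocab) (T : theory S) (V : propagator_map S -> Prop),
    (forall O, V O -> is_propagator T O) ->
    exists cs : list nat,
      forall (D : finType) (I : struct4 S D) (W : wo_index) (J : W -> struct4 S D),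
        refinement_seq V I J -> length_le W (peval cs #|D|).
Proof.
move=> S T V _.
exists (nseq (\max_(P : sym S) ar P).+1 (#|sym S| * 2)) => D I W J HJ.
apply: bounded_injective_listing (refinement_seq_rank_inj HJ) _ => x.
rewrite ltnS; apply: leq_trans (struct_rank_max (J x)) _.
exact: sum_expn_le_peval.
Qed.
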